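(* Let $m\geq 2$, $h\geq 1$, and let $G=T^+_{m,h}$ with root $r$, stem $r'$, and extended subtrees $G_1,\ldots,G_m$. Let $S\subseteq V(G)\setminus\{r'\}$. If $S\cup\{r'\}$ is a power dominating set for $G$, then for every $i\in[m]$ the set $(S\cap V(G_i))\cup\{r\}$ is a power dominating set for $G_i$.
   Context: For a graph $G=(V,E)$ and $S\subseteq V$: $\mathcal{P}^0(S)=N[S]$ (closed neighborhood of $S$), and for $k\geq 1$, $\mathcal{P}^k(S)=\mathcal{P}^{k-1}(S)\cup N^*(\mathcal{P}^{k-1}(S))$, where $x\in N^*(A)$ iff there is $a\in A$ such that $x$ is the only neighbor of $a$ not in $A$. For finite $G$ this stabilizes at $\mathcal{P}^\infty(S)$; $S$ is a power dominating set for $G$ if $\mathcal{P}^\infty(S)=V$. $T_{m,h}$ denotes the complete $m$-ary tree of height $h$ (every non-leaf vertex has exactly $m$ children, all leaves at distance $h$ from the root), rooted at $r$. The extended $m$-ary tree $T^+_{m,h}$ is obtained from $T_{m,h}$ by adding a new vertex $r'$ (the stem) and the edge $\{r,r'\}$. For $G=T_{m,h}$ or $G=T^+_{m,h}$ with $h\ge 1$, let $r_1,\ldots,r_m$ be the children of $r$, let $V_i$ be the set of descendants of $r_i$, and let $G_i=G[V_i\cup\{r_i,r\}]$ be the $i$-th extended subtree; $G_i$ is an extended $m$-ary tree of height $h-1$ with root $r_i$ and stem $r$. *)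

From mathcomp Require Import all_boot.
Set Implicit Arguments. Unset Strict Implicit. Unset Printing Implicit Defensive.

(* A graph is given by a symmetric relation [e] on a finite type [T];
   [W : {set T}] is the vertex set of the (induced) graph G[W] we work in. *)

Definition cnbhd (T : finType) (e : rel T) (W S : {set T}) : {set T} :=
  [set x in W | (x \in S) || [exists s in S, e s x]].

Definition nstar (T : finType) (e : rel T) (W A : {set T}) : {set T} :=
  [set x in W | (x \notin A) &&
     [exists a in A, e a x &&
        [forall y in W, ((y \notin A) && e a y) ==> (y == x)]]].

Fixpoint pdo (T : finType) (e : rel T) (W S : {set T}) (k : nat) : {set T} :=
  match k with
  | 0 => cnbhd e W S
  | k'.+1 => pdo e W S k' :|: nstar e W (pdo e W S k')
  end.

(* S is a power dominating set of G[W]: P^infty(S) = W, i.e. P^k(S) = W for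
   some k (the sequence is increasing, so it stabilizes at P^infty) *)
Definition power_dominating (T : finType) (e : rel T) (W S : {set T}) : Prop :=
  exists k, pdo e W S k = W.

(* Tree vertices are words over 'I_m of length <= h (the path from the root r,
   which is the empty word); the stem r' is [None]. *)
Definition tnode (m h : nat) := {d : 'I_h.+1 & (d : nat).-tuple 'I_m}.
Definition tvert (m h : nat) := option (tnode m h).

Definition word (m h : nat) (u : tnode m h) : seq 'I_m := tval (tagged u).

Definition is_child (m : nat) (s s' : seq 'I_m) : bool :=
  (size s' == (size s).+1) && (take (size s) s' == s).

Definition tadj (m h : nat) : rel (tvert m h) := fun v w =>
  match v, w with
  | None, Some u => word u == [::]
  | Some u, None => word u == [::]
  | Some u, Some u' => is_child (word u) (word u') || is_child (word u') (word u)
  | None, None => false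
  end.

Definition troot (m h : nat) : tvert m h :=
  Some (@Tagged 'I_h.+1 ord0 (fun d : 'I_h.+1 => (d : nat).-tuple 'I_m) [tuple]).
Definition tstem (m h : nat) : tvert m h := None.

(* vertex set V_i ∪ {r_i, r} of the i-th extended subtree G_i
   (r_i = the word [:: i], V_i = its descendants) *)
Definition subtree_verts (m h : nat) (i : 'I_m) : {set tvert m h} :=
  [set v | match v with
           | None => false
           | Some u => if word u is j :: _ then j == i else true
           end].

From mathcomp Require Import all_boot.

(* Let W be a set of vertices that is attached to the rest of
   the graph only through one vertex r: every neighbour of a vertex of
   W \ {r} lies in W.  If S0 power dominates the whole graph and S1 is a
   subset of W containing r and every vertex of S0 inside W, then, by
   induction on k, every vertex of W observed by S0 after k steps in the
   whole graph is already observed by S1 after k steps in G[W]: observing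
   r is free, and any other vertex of W is observed through a neighbour
   which must itself lie in W, whose unobserved neighbours in G[W] are
   among its unobserved neighbours in G.  Hence S1 power dominates G[W]. *)

Section PowerDominationRestriction.

Variables (T : finType) (e : rel T).

Lemma pdo_sub (W S : {set T}) (k : nat) : pdo e W S k \subset W.
Proof.
elim: k => [|k IH] /=.
  by apply/subsetP => x; rewrite inE => /andP[].
rewrite subUset IH; apply/subsetP => x; rewrite inE => /andP[] //.
Qed.

Lemma cnbhd_sub_pdo (W S : {set T}) (k : nat) : cnbhd e W S \subset pdo e W S k.
Proof. elim: k => //= k IH; exact: subset_trans IH (subsetUl _ _). Qed.

Variables (S0 S1 W : {set T}) (r : T).

Hypotheses (r_S1 : r \in S1) (r_W : r \in W) (S0W_S1 : S0 :&: W \subset S1).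
Hypothesis gate : forall x s, x \in W -> x != r -> e s x -> s \in W.

Lemma cnbhd_restrict : cnbhd e setT S0 :&: W \subset cnbhd e W S1.
Proof.
apply/subsetP => x; rewrite !inE => /andP[/orP[xS0|/existsP[s /andP[sS0 esx]]] xW].
  by rewrite xW (subsetP S0W_S1) // inE xS0 xW.
rewrite xW; have [->|xr] := eqVneq x r; first by rewrite r_S1.
apply/orP; right; apply/existsP; exists s; rewrite esx andbT.
by rewrite (subsetP S0W_S1) // inE sS0 (gate x s xW xr esx).
Qed.

(* Propagation step: if B (observed in G[W]) contains r and everything of W
   that A (observed in G) contains, then any vertex of W forced by A in G is
   in B or forced by B in G[W]; the forcing vertex lies in W by [gate]. *)
Lemma nstar_restrict (A B : {set T}) :
  A :&: W \subset B -> r \in B -> nstar e setT A :&: W \subset B :|: nstar e W B.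
Proof.
move=> AW_B r_B; apply/subsetP => x; rewrite !inE.
case/andP=> /and3P[_ xA /existsP[a /andP[aA /andP[eax a_only]]]] xW.
have [//|xB] := boolP (x \in B); rewrite xW /=.
have xr : x != r by apply: contraNneq xB => ->.
have aW := gate x a xW xr eax.
apply/existsP; exists a; rewrite (subsetP AW_B) ?inE ?aA ?aW // eax /=.
apply/forallP => y; apply/implyP => yW; apply/implyP => /andP[yB eay].
have yA : y \notin A by apply: contra yB => yA; rewrite (subsetP AW_B) // inE yA.
by move/forallP: a_only => /(_ y); rewrite inE yA eay.
Qed.

Lemma pdo_restrict (k : nat) : pdo e setT S0 k :&: W \subset pdo e W S1 k.
Proof.
have r_pdo k' : r \in pdo e W S1 k'.
  by apply: (subsetP (cnbhd_sub_pdo _ _ _)); rewrite inE r_W r_S1.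
elim: k => [|k IH] /=; first exact: cnbhd_restrict.
rewrite setIUl subUset (subset_trans IH (subsetUl _ _)).
exact: nstar_restrict.
Qed.

Lemma power_dominating_restrict :
  power_dominating e setT S0 -> power_dominating e W S1.
Proof.
case=> k Hk; exists k; apply/eqP; rewrite eqEsubset pdo_sub /=.
by have := pdo_restrict k; rewrite Hk setTI.
Qed.

End PowerDominationRestriction.

Lemma word_nil (m h : nat) (u : tnode m h) : word u = [::] -> Some u = troot m h.
Proof.
case: u => d t /= t_nil.
have d0 : d = ord0.
  apply: val_inj; rewrite /= -(size_tuple t); exact: (f_equal size t_nil).
subst d; congr (Some (Tagged _ _)); apply: tuple0.
Qed.

(* Every neighbour of a vertex of G_i other than its stem r lies in G_i:
   a vertex r_i w is adjacent only to r_i w' for words w, w'. *)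
Lemma subtree_gate (m h : nat) (i : 'I_m) (x s : tvert m h) :
  x \in subtree_verts h i -> x != troot m h -> tadj s x -> s \in subtree_verts h i.
Proof.
rewrite !inE; case: x => [u|] //.
case u_w: (word u) => [|j t] /=; first by rewrite (@word_nil _ _ _ u_w) eqxx.
move=> /eqP <- _; case: s => [u'|] /=; last by rewrite u_w.
rewrite u_w /is_child /=.
by case: (word u') => [|j' t'] //= /orP[] /andP[_ /eqP[->]].
Qed.

Theorem mainTheorem1 (m h : nat) (hm : 2 <= m) (hh : 1 <= h)
    (S : {set tvert m h}) (hS : tstem m h \notin S) :
  power_dominating (@tadj m h) [set: tvert m h] (tstem m h |: S) ->
  forall i : 'I_m,
    power_dominating (@tadj m h) (subtree_verts h i)
      ((S :&: subtree_verts h i) :|: [set troot m h]).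
Proof.
move=> pdS i; apply: (@power_dominating_restrict _ _ _ _ _ (troot m h)) pdS.
- by rewrite !inE eqxx orbT.
- by rewrite inE.
- apply/subsetP => x; rewrite !inE => /andP[/orP[/eqP ->|xS] xW] //.
  by rewrite xS xW.
- exact: subtree_gate.
Qed.
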